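(* Let $p>1$ and let $f:\mathbb{N}\to\mathbb{R}_{\geq 0}$ be a concave function with property $(C_p)$. Then there exists a constant $C$ (depending only on $f$ and $p$) such that for every finite subset $M=\{m_1,m_2,\dots,m_{2k}\}$ of $\mathbb{N}$ with $m_i<m_{i+1}$ for all $i$ and $m_1\geq 1$, \[ \sum_{i=1}^k \left(\frac{f(m_{2i})}{m_{2i}}\right)^p\frac{m_{2i}-m_{2i-1}}{m_{2i}} \leq C. \] Moreover, if in addition $m_{2i}\leq 2m_{2i-1}$ for each $i$, then \[ \sum_{i=1}^k \left(\frac{f(m_{2i-1})}{m_{2i-1}}\right)^p\frac{m_{2i}-m_{2i-1}}{m_{2i-1}} \leq 2^{p+1}C. \]
   Context: A function $f:\mathbb{N}\to\mathbb{R}_{\geq 0}$ is called concave if $f$ is non-decreasing and for all $m,n\in\mathbb{N}$ with $n\geq m$ one has $f(n+m)-f(n)\leq f(n)-f(n-m)$. Such an $f$ has property $(C_p)$ if $\sum_{n=1}^\infty \frac{1}{n}\left(\frac{f(n)}{n}\right)^p<\infty$. *)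

(* R : realType; real powers via powR (0 `^ p = 0 for p <> 0). *)
From mathcomp Require Import all_boot all_order all_algebra.
From mathcomp Require Import all_classical all_reals all_analysis.
Set Implicit Arguments. Unset Strict Implicit. Unset Printing Implicit Defensive.
Import Order.TTheory GRing.Theory Num.Theory numFieldNormedType.Exports.
Local Open Scope ring_scope.

Definition concave_fun {R : realType} (f : nat -> R) : Prop :=
  (forall n, 0 <= f n) /\
  (forall n1 n2 : nat, (n1 <= n2)%N -> f n1 <= f n2) /\
  (forall m n : nat, (m <= n)%N -> f (n + m)%N - f n <= f n - f (n - m)%N).

Definition prop_Cp {R : realType} (p : R) (f : nat -> R) : Prop :=
  cvgn (series (fun n : nat => ((f n.+1 / n.+1%:R) `^ p) / n.+1%:R)).

From mathcomp Require Import all_boot all_order all_algebra.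
From mathcomp Require Import all_classical all_reals all_analysis.
From mathcomp Require Import ring lra zify.
Import Order.TTheory GRing.Theory Num.Theory numFieldNormedType.Exports.
Local Open Scope ring_scope.

(* Concavity makes f(n)/n nonincreasing, so the block (f(b)/b)^p (b - a)/b is
   dominated by the part sum_(a < n <= b) (f(n)/n)^p / n of the series (C_p).
   The blocks [m_(2i-1), m_(2i)] are disjoint, hence the whole sum is bounded
   by the sum C of that series.  When b <= 2a, replacing the right endpoint b
   by the left endpoint a costs a factor at most 2 in f(.)/(.) (as f is
   nondecreasing) and a factor 2 in 1/(.), whence 2^p * 2. *)

Definition Cp_term {R : realType} (p : R) (f : nat -> R) (n : nat) : R :=
  (f n.+1 / n.+1%:R) `^ p / n.+1%:R.

Lemma sum_increments_le {R : realType} (s : nat -> R) (m : nat -> nat) (k : nat) :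
  {homo s : x y / (x <= y)%N >-> x <= y} -> (forall n, 0 <= s n) ->
  (forall i, (1 <= i < 2 * k)%N -> (m i <= m i.+1)%N) ->
  \sum_(1 <= i < k.+1) (s (m (2 * i)%N) - s (m (2 * i).-1)) <= s (m (2 * k)%N).
Proof.
move=> s_mono s_ge0; elim: k => [|k IH] m_mono; first by rewrite big_geq.
rewrite big_nat_recr // (_ : (2 * k.+1).-1 = (2 * k).+1) /=; last lia.
case: k IH m_mono => [|k] IH m_mono.
  by rewrite big_geq // add0r lerBlDr lerDl.
have := IH (fun i hi => m_mono i ltac:(lia)).
have := s_mono _ _ (m_mono (2 * k.+1)%N ltac:(lia)).
lra.
Qed.

Section ConcaveCp.
Variables (R : realType) (p : R) (f : nat -> R).

Lemma Cp_term_ge0 n : 0 <= Cp_term p f n.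
Proof. by rewrite /Cp_term divr_ge0 ?powR_ge0. Qed.

Lemma series_Cp_term_ge0 n : 0 <= series (Cp_term p f) n.
Proof. by rewrite seriesEnat /= sumr_ge0 // => i _; apply: Cp_term_ge0. Qed.

Lemma nondecreasing_series_Cp_term :
  {homo series (Cp_term p f) : n m / (n <= m)%N >-> n <= m}.
Proof.
move=> n m n_le_m; rewrite -subr_ge0 sub_series_geq //.
by apply: sumr_ge0 => i _; apply: Cp_term_ge0.
Qed.

Hypothesis f_concave : concave_fun f.

Lemma concave_mul_succ_le n : n%:R * f n.+1 <= n.+1%:R * f n.
Proof.
case: f_concave => f_ge0 [_ f_incr].
(* n |-> f n - n (f (n+1) - f n) is nondecreasing, since the increments of f
   are nonincreasing, and it starts at f 0 >= 0. *)
suff : 0 <= f n - n%:R * (f n.+1 - f n) by rewrite -natr1; nra.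
elim: n => [|n IH]; first by rewrite mul0r subr0.
have := f_incr 1%N n.+1 isT; rewrite addn1 subn1 /= => incr_le.
have : n.+1%:R * (f n.+2 - f n.+1) <= n.+1%:R * (f n.+1 - f n).
  by rewrite ler_wpM2l.
rewrite -natr1 in incr_le IH *; nra.
Qed.

Lemma concave_ratio_le n N : (1 <= n <= N)%N -> f N / N%:R <= f n / n%:R.
Proof.
elim: N => [|N IH]; first by case/andP=> /leq_trans h /h.
case/andP=> n_ge1; rewrite leq_eqVlt => /orP[/eqP->//|n_le_N].
have N_gt0 : (0 < N)%N by apply: leq_trans n_ge1 n_le_N.
apply: le_trans (IH _); last by rewrite n_ge1.
have N_pos : (0:R) < N%:R by rewrite ltr0n.
rewrite ler_pdivrMr // mulrAC ler_pdivlMr ?ltr0n //.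
by rewrite mulrC [X in _ <= X]mulrC concave_mul_succ_le.
Qed.

Hypothesis p_ge0 : 0 <= p.

Lemma block_le_series_increment a b : (a <= b)%N ->
  (f b / b%:R) `^ p * ((b%:R - a%:R) / b%:R)
    <= series (Cp_term p f) b - series (Cp_term p f) a.
Proof.
move=> a_le_b; rewrite sub_series_geq //.
have f_ge0 : forall n, 0 <= f n by case: f_concave.
apply: (@le_trans _ _ (\sum_(a <= n < b) (f b / b%:R) `^ p / b%:R)); last first.
  apply: ler_sum_nat => i /andP[a_le_i i_lt_b]; rewrite /Cp_term.
  apply: ler_pM; rewrite ?powR_ge0 ?invr_ge0 ?ler0n //.
    apply: ge0_ler_powR; rewrite ?nnegrE ?divr_ge0 ?ler0n //.
    by apply: concave_ratio_le.
  by rewrite lef_pV2 ?posrE ?ltr0n ?ler_nat //; apply: leq_ltn_trans i_lt_b.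
by rewrite sumr_const_nat -natrB // -mulr_natr mulrA mulrAC !mul1r mulr_natr.
Qed.

Lemma block_term_left_le a b : (1 <= a)%N -> (a <= b <= 2 * a)%N ->
  (f a / a%:R) `^ p * ((b%:R - a%:R) / a%:R)
    <= 2 `^ (p + 1) * ((f b / b%:R) `^ p * ((b%:R - a%:R) / b%:R)).
Proof.
case: f_concave => f_ge0 [f_mono _] a_ge1 /andP[a_le_b b_le_2a].
have a_gt0 : (0:R) < a%:R by rewrite ltr0n.
have b_gt0 : (0:R) < b%:R by rewrite ltr0n; apply: leq_trans a_le_b.
have inv_a_le : a%:R^-1 <= 2 / b%:R :> R.
  have : (b%:R:R) <= 2 * a%:R by rewrite -(natrM R 2 a) ler_nat.
  by move=> b_le_2a_R; rewrite ler_pdivlMr // mulrC ler_pdivrMr.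
have ratio_le : (f a / a%:R) `^ p <= 2 `^ p * (f b / b%:R) `^ p.
  rewrite -powRM ?divr_ge0 ?ler0n //.
  apply: ge0_ler_powR; rewrite ?nnegrE ?mulr_ge0 ?divr_ge0 ?ler0n //.
  by rewrite mulrCA; apply: ler_pM => //; apply: f_mono.
have gap_ge0 : (0:R) <= b%:R - a%:R by rewrite subr_ge0 ler_nat.
have gap_le : (b%:R - a%:R) / a%:R <= 2 * ((b%:R - a%:R) / b%:R) :> R.
  by rewrite mulrCA; apply: ler_wpM2l.
rewrite powRD ?pnatr_eq0 ?implybT // powRr1 //.
apply: le_trans (ler_pM _ _ ratio_le gap_le) _; rewrite ?powR_ge0 ?divr_ge0 //.
by rewrite le_eqVlt; apply/orP; left; apply/eqP; ring.
Qed.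

End ConcaveCp.

Theorem lemma2p3 (R : realType) (p : R) (f : nat -> R) :
  1 < p -> concave_fun f -> prop_Cp p f ->
  exists C : R,
    forall (k : nat) (m : nat -> nat),
      (1 <= m 1)%N ->
      (forall i : nat, (1 <= i < 2 * k)%N -> (m i < m i.+1)%N) ->
      (\sum_(1 <= i < k.+1)
          (f (m (2 * i)%N) / (m (2 * i)%N)%:R) `^ p
          * (((m (2 * i)%N)%:R - (m (2 * i).-1)%:R) / (m (2 * i)%N)%:R) <= C)
      /\
      ((forall i : nat, (1 <= i <= k)%N -> (m (2 * i)%N <= 2 * m (2 * i).-1)%N) ->
       \sum_(1 <= i < k.+1)
          (f (m (2 * i).-1) / (m (2 * i).-1)%:R) `^ p
          * (((m (2 * i)%N)%:R - (m (2 * i).-1)%:R) / (m (2 * i).-1)%:R)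
        <= 2 `^ (p + 1) * C).
Proof.
move=> p_gt1 f_concave f_Cp.
have p_ge0 : 0 <= p by lra.
have S_le_lim := nondecreasing_cvgn_le (nondecreasing_series_Cp_term _ p f) f_Cp.
set S := series (Cp_term p f) in S_le_lim *.
exists (limn S) => k m m1_ge1 m_incr.
have blocks_le : \sum_(1 <= i < k.+1)
    (f (m (2 * i)%N) / (m (2 * i)%N)%:R) `^ p
    * (((m (2 * i)%N)%:R - (m (2 * i).-1)%:R) / (m (2 * i)%N)%:R) <= limn S.
  apply: le_trans (S_le_lim (m (2 * k)%N)).
  apply: le_trans (sum_increments_le S m k (nondecreasing_series_Cp_term _ p f)
    (series_Cp_term_ge0 _ p f) (fun i hi => ltnW (m_incr i hi))).
  apply: ler_sum_nat => i /andP[i_ge1 i_le_k].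
  apply: block_le_series_increment => //; apply/ltnW.
  by have := m_incr (2 * i).-1 ltac:(lia); rewrite prednK //; lia.
split=> // m_doubling.
apply: le_trans (ler_wpM2l (powR_ge0 _ _) blocks_le).
rewrite mulr_sumr; apply: ler_sum_nat => i /andP[i_ge1 i_le_k].
apply: block_term_left_le => //.
- have [-> //|i_gt1] := eqVneq i 1%N.
  have -> : (2 * i).-1 = ((2 * i).-2).+1 by lia.
  by have := m_incr (2 * i).-2 ltac:(lia); lia.
- rewrite m_doubling ?andbT; last lia.
  by have := m_incr (2 * i).-1 ltac:(lia); rewrite prednK //; lia.
Qed.
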